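(* Consider the single-armed lazy restless bandit described in the context with fixed subsidy $\eta$ and $p_{0,0}<p_{1,0}$, and let $b=\min\left\{1,\frac{R_1-R_0}{\rho_1-\rho_0}\right\}$. Then $\pi\mapsto V_S(\pi)-V_{NS}(\pi)$ is decreasing on $[0,1]$ under either of the following conditions: (1) for any $K>1$, when $0<p_{1,0}-p_{0,0}<b/5$ and $\beta\in(0,1)$; (2) for any $K>1$, when $\beta\in(0,b/5)$.
   Context: Single-armed lazy restless bandit: an arm has a hidden state in $\{0,1\}$ evolving as a two-state Markov chain with transition probabilities $p_{i,j}$ ($p_{i,0}+p_{i,1}=1$). During each session the chain makes exactly $K\ge1$ transitions. In each session the decision maker plays the arm or not. If played with the arm in state $i$ at session start, an ACK is received with probability $\rho_i\in[0,1]$ and the expected reward is $R_i$; if not played, subsidy $\eta$ is received and nothing observed. Discount $\beta\in(0,1)$. Standing assumptions: $\rho_0<\rho_1$, $R_0<R_1$. Belief $\pi\in[0,1]$ = probability of state $0$. $R_S(\pi)=\pi R_0+(1-\pi)R_1$, $\rho(\pi)=\pi\rho_0+(1-\pi)\rho_1$, $\gamma_1(\pi)=\frac{(1-\pi)\rho_1p_{1,0}+\pi\rho_0p_{0,0}}{\rho_1(1-\pi)+\rho_0\pi}$, $\gamma_0(\pi)=\frac{(1-\pi)(1-\rho_1)p_{1,0}+\pi(1-\rho_0)p_{0,0}}{(1-\rho_1)(1-\pi)+(1-\rho_0)\pi}$, $\gamma_2(\pi)=(p_{0,0}-p_{1,0})^K\pi+p_{1,0}\sum_{j=0}^{K-1}(p_{0,0}-p_{1,0})^j$.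 $V_S,V_{NS},V$ are the unique bounded solution of $V_S(\pi)=R_S(\pi)+\beta\big(\rho(\pi)V(\gamma_1(\pi))+(1-\rho(\pi))V(\gamma_0(\pi))\big)$, $V_{NS}(\pi)=\eta+\beta V(\gamma_2(\pi))$, $V(\pi)=\max\{V_S(\pi),V_{NS}(\pi)\}$ (a term with zero coefficient is taken to be $0$). *)

From Stdlib Require Import Reals.
Open Scope R_scope.

Fixpoint geom_sum (a : R) (n : nat) : R :=
  match n with
  | O => 0
  | S m => geom_sum a m + a ^ m
  end.

(* Expected immediate reward when playing, belief pi = P(state 0). *)
Definition R_S (R0 R1 pi : R) : R := pi * R0 + (1 - pi) * R1.

(* Probability of an ACK when playing. *)
Definition rho (rho0 rho1 pi : R) : R := pi * rho0 + (1 - pi) * rho1.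

(* Belief update after playing and receiving an ACK. *)
Definition gamma1 (p00 p10 rho0 rho1 pi : R) : R :=
  ((1 - pi) * rho1 * p10 + pi * rho0 * p00) / (rho1 * (1 - pi) + rho0 * pi).

(* Belief update after playing and receiving no ACK. *)
Definition gamma0 (p00 p10 rho0 rho1 pi : R) : R :=
  ((1 - pi) * (1 - rho1) * p10 + pi * (1 - rho0) * p00)
  / ((1 - rho1) * (1 - pi) + (1 - rho0) * pi).

(* Belief update after K transitions without playing. *)
Definition gamma2 (p00 p10 : R) (K : nat) (pi : R) : R :=
  (p00 - p10) ^ K * pi + p10 * geom_sum (p00 - p10) K.

(* (VS, VNS, V) solve the Bellman system on [0,1], V bounded on [0,1].
   A term with zero coefficient is automatically 0 (0 * anything = 0). *)
Definition bellman_solution (p00 p10 rho0 rho1 R0 R1 eta beta : R) (K : nat)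
    (VS VNS V : R -> R) : Prop :=
  (exists M, forall pi, 0 <= pi <= 1 -> Rabs (V pi) <= M) /\
  (forall pi, 0 <= pi <= 1 ->
     VS pi = R_S R0 R1 pi
             + beta * (rho rho0 rho1 pi * V (gamma1 p00 p10 rho0 rho1 pi)
                       + (1 - rho rho0 rho1 pi) * V (gamma0 p00 p10 rho0 rho1 pi))) /\
  (forall pi, 0 <= pi <= 1 -> VNS pi = eta + beta * V (gamma2 p00 p10 K pi)) /\
  (forall pi, 0 <= pi <= 1 -> V pi = Rmax (VS pi) (VNS pi)).

From Stdlib Require Import Reals Lra Psatz.
Open Scope R_scope.

(** Value iteration from [0] converges uniformly to [V], and the Bellman operator
    preserves the functions that are convex and [L]-Lipschitz on [0,1] for
    [L = (R1 - R0) / (1 - beta (p10 - p00))]: the skip branch composes with an affine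
    contraction of the belief, while the play branch preserves convexity and multiplies
    Lipschitz constants by [p10 - p00], because the expected value of a line at the
    posterior belief is affine in the prior, interpolating between the next beliefs
    [p00] and [p10] of the two states.  Hence [V_S - V_NS] has slope at most
    [-(R1 - R0) + 2 beta (p10 - p00) L], which is nonpositive as soon as
    [3 beta (p10 - p00) <= 1]; since [b <= 1], both conditions of the theorem give this. *)

Definition line (a m q : R) : R := a + m * q.

Definition supports (W : R -> R) (t a m : R) : Prop :=
  line a m t = W t /\ forall s, 0 <= s <= 1 -> line a m s <= W s.

(* [W] is convex and [L]-Lipschitz on [0,1], witnessed by supporting lines.  This is
   the invariant of value iteration; only the plain Lipschitz bound is passed to the
   limit [V]. *)
Definition convex_lip (L : R) (W : R -> R) : Prop :=
  forall t, 0 <= t <= 1 -> exists a m, -L <= m <= L /\ supports W t a m.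

Definition lipschitz (L : R) (f : R -> R) : Prop :=
  forall x y, 0 <= x <= 1 -> 0 <= y <= 1 -> f y - f x <= L * Rabs (y - x).

Lemma convex_lip_ext L f g :
  (forall t, 0 <= t <= 1 -> f t = g t) -> convex_lip L f -> convex_lip L g.
Proof.
  intros Efg Hf t Ht; destruct (Hf t Ht) as (a & m & Hm & Et & Hs).
  exists a, m; split; [exact Hm | split].
  - rewrite <- Efg by exact Ht; exact Et.
  - intros s Hs'; rewrite <- Efg by exact Hs'; auto.
Qed.

Lemma convex_lip_mono L L' W : L <= L' -> convex_lip L W -> convex_lip L' W.
Proof.
  intros HL HW t Ht; destruct (HW t Ht) as (a & m & Hm & HS).
  exists a, m; split; [lra | exact HS].
Qed.

Lemma convex_lip_max L f g :
  convex_lip L f -> convex_lip L g -> convex_lip L (fun t => Rmax (f t) (g t)).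
Proof.
  intros Hf Hg t Ht.
  destruct (Rle_dec (g t) (f t)) as [Hgf | Hfg].
  - destruct (Hf t Ht) as (a & m & Hm & Et & Hs).
    exists a, m; split; [exact Hm | split].
    + rewrite Rmax_left; assumption.
    + intros s Hs'; eapply Rle_trans; [apply Hs, Hs' | apply Rmax_l].
  - destruct (Hg t Ht) as (a & m & Hm & Et & Hs).
    exists a, m; split; [exact Hm | split].
    + rewrite Rmax_right; [assumption | lra].
    + intros s Hs'; eapply Rle_trans; [apply Hs, Hs' | apply Rmax_r].
Qed.

Lemma convex_lip_add_line L a c k f :
  0 <= k -> convex_lip L f ->
  convex_lip (Rabs c + k * L) (fun t => a + c * t + k * f t).
Proof.
  intros Hk Hf t Ht; destruct (Hf t Ht) as (b & m & Hm & Et & Hs).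
  exists (a + k * b), (c + k * m); split; [| split].
  - assert (k * m <= k * L) by (apply Rmult_le_compat_l; lra).
    assert (k * - L <= k * m) by (apply Rmult_le_compat_l; lra).
    split_Rabs; lra.
  - unfold line in *; rewrite <- Et; ring.
  - intros s Hs'; specialize (Hs s Hs'); unfold line in *.
    assert (k * (b + m * s) <= k * f s) by (apply Rmult_le_compat_l; lra).
    lra.
Qed.

Lemma convex_lip_comp_line L u v W :
  (forall t, 0 <= t <= 1 -> 0 <= v * t + u <= 1) -> convex_lip L W ->
  convex_lip (Rabs v * L) (fun t => W (v * t + u)).
Proof.
  intros Hrange HW t Ht; destruct (HW _ (Hrange t Ht)) as (a & m & Hm & Et & Hs).
  exists (a + m * u), (m * v); split; [| split].
  - assert (Hmv : Rabs (m * v) <= Rabs v * L).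
    { rewrite Rabs_mult, Rmult_comm.
      apply Rmult_le_compat_l; [apply Rabs_pos | apply Rabs_le; lra]. }
    revert Hmv; split_Rabs; lra.
  - unfold line in *; rewrite <- Et; ring.
  - intros s Hs'; specialize (Hs _ (Hrange s Hs')); unfold line in *; lra.
Qed.

Lemma convex_lip_lipschitz L W : convex_lip L W -> lipschitz L W.
Proof.
  intros HW x y Hx Hy; destruct (HW y Hy) as (a & m & Hm & Ey & Hs).
  specialize (Hs x Hx); unfold line in *.
  assert (m * (y - x) <= L * Rabs (y - x)) by (split_Rabs; nra).
  lra.
Qed.

Lemma lipschitz_of_approx L f :
  (forall e, 0 < e -> exists g, lipschitz L g /\
     forall t, 0 <= t <= 1 -> Rabs (f t - g t) <= e) ->
  lipschitz L f.
Proof.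
  intros Happrox x y Hx Hy; apply Rle_plus_epsilon; intros eps Heps.
  destruct (Happrox (eps / 2)) as (g & Hg & Hfg); [lra |].
  specialize (Hg x y Hx Hy); pose proof (Hfg x Hx) as Dx; pose proof (Hfg y Hy) as Dy.
  revert Hg Dx Dy; split_Rabs; lra.
Qed.

Lemma supporting_lines_ordered L W u v q0 q1 :
  0 <= u -> v <= 1 -> u <= q0 <= q1 -> q1 <= v -> convex_lip L W ->
  exists a0 m0 a1 m1,
    -L <= m0 <= L /\ -L <= m1 <= L /\ supports W q0 a0 m0 /\ supports W q1 a1 m1 /\
    line a1 m1 u <= line a0 m0 u /\ line a0 m0 v <= line a1 m1 v.
Proof.
  intros Hu Hv Hq0 Hq1 HW.
  destruct (HW q1 ltac:(lra)) as (a1 & m1 & Hm1 & S1).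
  destruct (Req_dec q0 q1) as [<- | Hne].
  - exists a1, m1, a1, m1; repeat split; try apply S1; lra.
  - destruct (HW q0 ltac:(lra)) as (a0 & m0 & Hm0 & S0).
    destruct S0 as [E0 B0], S1 as [E1 B1].
    pose proof (B0 q1 ltac:(lra)) as B01; pose proof (B1 q0 ltac:(lra)) as B10.
    unfold line in *.
    (* each line lies below the other one's touching point, so the slopes are ordered *)
    assert (Hslopes : m0 <= m1) by nra.
    exists a0, m0, a1, m1; unfold supports, line; repeat split; auto; nra.
Qed.

Lemma mixture_slope_bound L u v r0 r1 a0 m0 a1 m1 :
  0 <= r0 <= r1 -> r1 <= 1 -> u <= v -> -L <= m0 <= L -> -L <= m1 <= L ->
  line a1 m1 u <= line a0 m0 u -> line a0 m0 v <= line a1 m1 v ->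
  let slope := (r0 * line a1 m1 u + (1 - r0) * line a0 m0 u)
               - (r1 * line a1 m1 v + (1 - r1) * line a0 m0 v) in
  -((v - u) * L) <= slope <= (v - u) * L.
Proof.
  intros Hr0 Hr1 Huv Hm0 Hm1 Hu Hv slope; unfold slope, line in *.
  assert (0 <= (r1 - r0) * ((a0 + m0 * u) - (a1 + m1 * u))) by (apply Rmult_le_pos; lra).
  assert (0 <= (r1 - r0) * ((a1 + m1 * v) - (a0 + m0 * v))) by (apply Rmult_le_pos; lra).
  assert (-L <= r0 * m1 + (1 - r0) * m0 <= L) by nra.
  assert (-L <= r1 * m1 + (1 - r1) * m0 <= L) by nra.
  split; nra.
Qed.

Lemma Rabs_pow_le_1 x n : Rabs x <= 1 -> Rabs (x ^ n) <= 1.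
Proof.
  intros Hx; rewrite <- RPow_abs, <- (pow1 n).
  apply pow_incr; split; [apply Rabs_pos | exact Hx].
Qed.

Lemma Rabs_pow_le_Rabs x n : Rabs x <= 1 -> (1 <= n)%nat -> Rabs (x ^ n) <= Rabs x.
Proof.
  intros Hx Hn; destruct n as [| n]; [lia |]; simpl.
  rewrite Rabs_mult; pose proof (Rabs_pow_le_1 x n Hx); pose proof (Rabs_pos x); nra.
Qed.

Lemma rho_bounds rho0 rho1 t :
  0 <= rho0 <= 1 -> 0 <= rho1 <= 1 -> 0 <= t <= 1 -> 0 <= rho rho0 rho1 t <= 1.
Proof. unfold rho; intros; nra. Qed.

Lemma one_sub_rho rho0 rho1 t : 1 - rho rho0 rho1 t = rho (1 - rho0) (1 - rho1) t.
Proof. unfold rho; ring. Qed.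

Lemma gamma0_as_gamma1 p00 p10 rho0 rho1 t :
  gamma0 p00 p10 rho0 rho1 t = gamma1 p00 p10 (1 - rho0) (1 - rho1) t.
Proof. reflexivity. Qed.

(* When [rho t = 0], [gamma1 t] is the junk value [_ / 0 = 0]; multiplying by [rho t]
   gives an identity valid in all cases. *)
Lemma rho_mul_gamma1 p00 p10 rho0 rho1 t :
  0 <= rho0 -> 0 <= rho1 -> 0 <= t <= 1 ->
  rho rho0 rho1 t * gamma1 p00 p10 rho0 rho1 t = (1 - t) * rho1 * p10 + t * rho0 * p00.
Proof.
  intros H0 H1 Ht; unfold gamma1.
  replace (rho1 * (1 - t) + rho0 * t) with (rho rho0 rho1 t) by (unfold rho; ring).
  destruct (Req_dec (rho rho0 rho1 t) 0) as [Z | NZ].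
  - assert (Z1 : (1 - t) * rho1 = 0) by (unfold rho in Z; nra).
    assert (Z0 : t * rho0 = 0) by (unfold rho in Z; nra).
    rewrite Z, Z1, Z0; ring.
  - field; exact NZ.
Qed.

Lemma rho_mul_gamma0 p00 p10 rho0 rho1 t :
  rho0 <= 1 -> rho1 <= 1 -> 0 <= t <= 1 ->
  (1 - rho rho0 rho1 t) * gamma0 p00 p10 rho0 rho1 t
  = (1 - t) * (1 - rho1) * p10 + t * (1 - rho0) * p00.
Proof.
  intros; rewrite one_sub_rho, gamma0_as_gamma1; apply rho_mul_gamma1; lra.
Qed.

Lemma gamma1_between p00 p10 rho0 rho1 t :
  p00 <= p10 -> 0 <= rho0 -> 0 <= rho1 -> 0 <= t <= 1 -> 0 < rho rho0 rho1 t ->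
  p00 <= gamma1 p00 p10 rho0 rho1 t <= p10.
Proof.
  intros Hp H0 H1 Ht Hr.
  pose proof (rho_mul_gamma1 p00 p10 rho0 rho1 t H0 H1 Ht) as E.
  set (g := gamma1 p00 p10 rho0 rho1 t) in *; unfold rho in *.
  assert (0 <= (1 - t) * rho1 * (p10 - p00)) by (apply Rmult_le_pos; nra).
  assert (0 <= t * rho0 * (p10 - p00)) by (apply Rmult_le_pos; nra).
  split; nra.
Qed.

Lemma gamma0_between p00 p10 rho0 rho1 t :
  p00 <= p10 -> rho0 <= 1 -> rho1 <= 1 -> 0 <= t <= 1 -> 0 < 1 - rho rho0 rho1 t ->
  p00 <= gamma0 p00 p10 rho0 rho1 t <= p10.
Proof.
  intros; rewrite one_sub_rho in *; rewrite gamma0_as_gamma1.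
  apply gamma1_between; auto; lra.
Qed.

Lemma gamma1_bounds p00 p10 rho0 rho1 t :
  0 <= p00 <= p10 -> p10 <= 1 -> 0 <= rho0 <= 1 -> 0 <= rho1 <= 1 -> 0 <= t <= 1 ->
  0 <= gamma1 p00 p10 rho0 rho1 t <= 1.
Proof.
  intros Hp Hp1 H0 H1 Ht.
  destruct (Req_dec (rho rho0 rho1 t) 0) as [Z | NZ].
  - unfold gamma1.
    replace (rho1 * (1 - t) + rho0 * t) with (rho rho0 rho1 t) by (unfold rho; ring).
    rewrite Z; unfold Rdiv; rewrite Rinv_0, Rmult_0_r; lra.
  - pose proof (rho_bounds rho0 rho1 t H0 H1 Ht).
    pose proof (gamma1_between p00 p10 rho0 rho1 t ltac:(lra) ltac:(lra) ltac:(lra) Ht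
                  ltac:(lra)).
    lra.
Qed.

Lemma gamma0_bounds p00 p10 rho0 rho1 t :
  0 <= p00 <= p10 -> p10 <= 1 -> 0 <= rho0 <= 1 -> 0 <= rho1 <= 1 -> 0 <= t <= 1 ->
  0 <= gamma0 p00 p10 rho0 rho1 t <= 1.
Proof. intros; rewrite gamma0_as_gamma1; apply gamma1_bounds; auto; lra. Qed.

Lemma gamma0_le_gamma1 p00 p10 rho0 rho1 t :
  p00 <= p10 -> 0 <= rho0 <= rho1 -> rho1 <= 1 -> 0 <= t <= 1 ->
  0 < rho rho0 rho1 t < 1 ->
  gamma0 p00 p10 rho0 rho1 t <= gamma1 p00 p10 rho0 rho1 t.
Proof.
  intros Hp H0 H1 Ht Hr.
  pose proof (rho_mul_gamma1 p00 p10 rho0 rho1 t ltac:(lra) ltac:(lra) Ht) as E1.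
  pose proof (rho_mul_gamma0 p00 p10 rho0 rho1 t ltac:(lra) H1 Ht) as E0.
  set (r := rho rho0 rho1 t) in *.
  set (g1 := gamma1 p00 p10 rho0 rho1 t) in *; set (g0 := gamma0 p00 p10 rho0 rho1 t) in *.
  assert (E : r * (1 - r) * (g1 - g0) = t * (1 - t) * (rho1 - rho0) * (p10 - p00)).
  { transitivity ((1 - r) * (r * g1) - r * ((1 - r) * g0)); [ring |].
    rewrite E1, E0; unfold r, rho; ring. }
  assert (0 <= t * (1 - t) * (rho1 - rho0) * (p10 - p00)).
  { repeat apply Rmult_le_pos; lra. }
  assert (0 < r * (1 - r)) by (apply Rmult_lt_0_compat; lra).
  nra.
Qed.

Lemma gamma2_succ p00 p10 K t :
  gamma2 p00 p10 (S K) t = gamma2 p00 p10 K (p10 + (p00 - p10) * t).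
Proof. unfold gamma2; simpl; ring. Qed.

Lemma gamma2_bounds p00 p10 K t :
  0 <= p00 <= 1 -> 0 <= p10 <= 1 -> 0 <= t <= 1 -> 0 <= gamma2 p00 p10 K t <= 1.
Proof.
  intros H00 H10; revert t; induction K as [| K IH]; intros t Ht.
  - unfold gamma2; simpl; lra.
  - rewrite gamma2_succ; apply IH; nra.
Qed.

Lemma gamma2_sub p00 p10 K s t :
  gamma2 p00 p10 K s - gamma2 p00 p10 K t = (p00 - p10) ^ K * (s - t).
Proof. unfold gamma2; ring. Qed.

Section Bandit.

Variables (p00 p10 rho0 rho1 R0 R1 eta beta : R) (K : nat).
Hypotheses (Hp00 : 0 <= p00) (Hp : p00 <= p10) (Hp10 : p10 <= 1)
  (Hrho0 : 0 <= rho0) (Hrho : rho0 <= rho1) (Hrho1 : rho1 <= 1)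
  (Hbeta : 0 <= beta).

Definition play_next (W1 W0 : R -> R) (t : R) : R :=
  rho rho0 rho1 t * W1 (gamma1 p00 p10 rho0 rho1 t)
  + (1 - rho rho0 rho1 t) * W0 (gamma0 p00 p10 rho0 rho1 t).

Definition bellman (W : R -> R) (t : R) : R :=
  Rmax (R_S R0 R1 t + beta * play_next W W t) (eta + beta * W (gamma2 p00 p10 K t)).

Let gamma1_unit t : 0 <= t <= 1 -> 0 <= gamma1 p00 p10 rho0 rho1 t <= 1.
Proof. intros; apply gamma1_bounds; lra. Qed.

Let gamma0_unit t : 0 <= t <= 1 -> 0 <= gamma0 p00 p10 rho0 rho1 t <= 1.
Proof. intros; apply gamma0_bounds; lra. Qed.

Let rho_unit t : 0 <= t <= 1 -> 0 <= rho rho0 rho1 t <= 1.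
Proof. intros; apply rho_bounds; lra. Qed.

Lemma play_next_mono W1 W0 U1 U0 t :
  (forall q, 0 <= q <= 1 -> W1 q <= U1 q) -> (forall q, 0 <= q <= 1 -> W0 q <= U0 q) ->
  0 <= t <= 1 -> play_next W1 W0 t <= play_next U1 U0 t.
Proof.
  intros H1 H0 Ht; unfold play_next.
  pose proof (rho_unit t Ht).
  pose proof (H1 _ (gamma1_unit t Ht)); pose proof (H0 _ (gamma0_unit t Ht)).
  apply Rplus_le_compat; apply Rmult_le_compat_l; lra.
Qed.

Lemma play_next_dist V W e t :
  (forall q, 0 <= q <= 1 -> Rabs (V q - W q) <= e) -> 0 <= t <= 1 ->
  Rabs (play_next V V t - play_next W W t) <= e.
Proof.
  intros HVW Ht; unfold play_next.
  pose proof (rho_unit t Ht) as Hr.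
  pose proof (HVW _ (gamma1_unit t Ht)) as D1; pose proof (HVW _ (gamma0_unit t Ht)) as D0.
  set (r := rho rho0 rho1 t) in *.
  set (g1 := gamma1 p00 p10 rho0 rho1 t) in *; set (g0 := gamma0 p00 p10 rho0 rho1 t) in *.
  replace (r * V g1 + (1 - r) * V g0 - (r * W g1 + (1 - r) * W g0))
    with (r * (V g1 - W g1) + (1 - r) * (V g0 - W g0)) by ring.
  eapply Rle_trans; [apply Rabs_triang |].
  rewrite !Rabs_mult, (Rabs_pos_eq r), (Rabs_pos_eq (1 - r)) by lra.
  assert (r * Rabs (V g1 - W g1) <= r * e) by (apply Rmult_le_compat_l; lra).
  assert ((1 - r) * Rabs (V g0 - W g0) <= (1 - r) * e) by (apply Rmult_le_compat_l; lra).
  lra.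
Qed.

Lemma play_next_lines a1 m1 a0 m0 s :
  0 <= s <= 1 ->
  play_next (line a1 m1) (line a0 m0) s
  = s * (rho0 * line a1 m1 p00 + (1 - rho0) * line a0 m0 p00)
    + (1 - s) * (rho1 * line a1 m1 p10 + (1 - rho1) * line a0 m0 p10).
Proof.
  intros Hs; unfold play_next, line.
  transitivity (rho rho0 rho1 s * a1 + m1 * (rho rho0 rho1 s * gamma1 p00 p10 rho0 rho1 s)
    + (1 - rho rho0 rho1 s) * a0
    + m0 * ((1 - rho rho0 rho1 s) * gamma0 p00 p10 rho0 rho1 s)); [ring |].
  rewrite rho_mul_gamma1, rho_mul_gamma0 by lra; unfold rho; ring.
Qed.

(* An observation of probability 0 has a junk posterior, so both lines are then taken
   at the other posterior. *)
Lemma play_next_touching_lines L W t :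
  convex_lip L W -> 0 <= t <= 1 ->
  exists a0 m0 a1 m1,
    -L <= m0 <= L /\ -L <= m1 <= L /\
    (forall s, 0 <= s <= 1 -> line a0 m0 s <= W s) /\
    (forall s, 0 <= s <= 1 -> line a1 m1 s <= W s) /\
    line a1 m1 p00 <= line a0 m0 p00 /\ line a0 m0 p10 <= line a1 m1 p10 /\
    play_next (line a1 m1) (line a0 m0) t = play_next W W t.
Proof.
  intros HW Ht; pose proof (rho_unit t Ht) as Hr; unfold play_next.
  set (g1 := gamma1 p00 p10 rho0 rho1 t); set (g0 := gamma0 p00 p10 rho0 rho1 t).
  destruct (Req_dec (rho rho0 rho1 t) 0) as [Z | NZ];
    [| destruct (Req_dec (rho rho0 rho1 t) 1) as [O | NO]].
  - assert (Hg0 : p00 <= g0 <= p10) by (apply gamma0_between; lra).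
    destruct (supporting_lines_ordered L W p00 p10 g0 g0) as
      (a0 & m0 & a1 & m1 & Hm0 & Hm1 & [E0 B0] & [_ B1] & Hu & Hv); try lra; auto.
    exists a0, m0, a1, m1; repeat split; try lra; auto.
    rewrite Z, E0; ring.
  - assert (Hg1 : p00 <= g1 <= p10) by (apply gamma1_between; lra).
    destruct (supporting_lines_ordered L W p00 p10 g1 g1) as
      (a0 & m0 & a1 & m1 & Hm0 & Hm1 & [_ B0] & [E1 B1] & Hu & Hv); try lra; auto.
    exists a0, m0, a1, m1; repeat split; try lra; auto.
    rewrite O, E1; ring.
  - assert (Hg0 : p00 <= g0 <= p10) by (apply gamma0_between; lra).
    assert (Hg1 : p00 <= g1 <= p10) by (apply gamma1_between; lra).
    assert (Hg01 : g0 <= g1) by (apply gamma0_le_gamma1; lra).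
    destruct (supporting_lines_ordered L W p00 p10 g0 g1) as
      (a0 & m0 & a1 & m1 & Hm0 & Hm1 & [E0 B0] & [E1 B1] & Hu & Hv); try lra; auto.
    exists a0, m0, a1, m1; repeat split; try lra; auto.
    rewrite E0, E1; ring.
Qed.

Lemma play_next_convex_lip L W :
  convex_lip L W -> convex_lip ((p10 - p00) * L) (play_next W W).
Proof.
  intros HW t Ht.
  destruct (play_next_touching_lines L W t HW Ht) as
    (a0 & m0 & a1 & m1 & Hm0 & Hm1 & B0 & B1 & Hu & Hv & Et).
  set (E1 := rho0 * line a1 m1 p00 + (1 - rho0) * line a0 m0 p00).
  set (E0 := rho1 * line a1 m1 p10 + (1 - rho1) * line a0 m0 p10).
  assert (Hline : forall s, 0 <= s <= 1 ->
            line E0 (E1 - E0) s = play_next (line a1 m1) (line a0 m0) s).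
  { intros s Hs; rewrite play_next_lines by exact Hs; unfold line at 1, E0, E1; ring. }
  exists E0, (E1 - E0); split; [| split].
  - apply (mixture_slope_bound L p00 p10 rho0 rho1 a0 m0 a1 m1); lra.
  - rewrite Hline, Et by exact Ht; reflexivity.
  - intros s Hs; rewrite Hline by exact Hs; apply play_next_mono; auto.
Qed.

Lemma bellman_convex_lip L W :
  R0 <= R1 -> beta < 1 -> 0 <= L -> (R1 - R0) + beta * ((p10 - p00) * L) <= L ->
  convex_lip L W -> convex_lip L (bellman W).
Proof.
  intros HR Hbeta1 HL Hinv HW; apply convex_lip_max.
  - apply (convex_lip_ext _ (fun t => R1 + (R0 - R1) * t + beta * play_next W W t)).
    { intros t _; unfold R_S; ring. }
    apply (convex_lip_mono (Rabs (R0 - R1) + beta * ((p10 - p00) * L))).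
    { rewrite Rabs_left1 by lra; lra. }
    apply convex_lip_add_line; [exact Hbeta | apply play_next_convex_lip, HW].
  - set (d := (p00 - p10) ^ K).
    assert (Hd : Rabs d <= 1) by (apply Rabs_pow_le_1; split_Rabs; lra).
    apply (convex_lip_ext _ (fun t => eta + 0 * t + beta * W (gamma2 p00 p10 K t))).
    { intros t _; ring. }
    apply (convex_lip_mono (Rabs 0 + beta * (Rabs d * L))).
    { rewrite Rabs_R0; assert (Rabs d * L <= L) by nra; nra. }
    apply convex_lip_add_line; [exact Hbeta |].
    apply convex_lip_comp_line; [| exact HW].
    intros t Ht; apply gamma2_bounds; lra.
Qed.

Lemma Rabs_Rmax_sub_le a b c d e :
  Rabs (a - c) <= e -> Rabs (b - d) <= e -> Rabs (Rmax a b - Rmax c d) <= e.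
Proof. unfold Rmax; destruct (Rle_dec a b), (Rle_dec c d); split_Rabs; lra. Qed.

Lemma bellman_dist V W e t :
  (forall q, 0 <= q <= 1 -> Rabs (V q - W q) <= e) -> 0 <= t <= 1 ->
  Rabs (bellman V t - bellman W t) <= beta * e.
Proof.
  intros HVW Ht; unfold bellman; apply Rabs_Rmax_sub_le.
  - replace (R_S R0 R1 t + beta * play_next V V t - (R_S R0 R1 t + beta * play_next W W t))
      with (beta * (play_next V V t - play_next W W t)) by ring.
    rewrite Rabs_mult, (Rabs_pos_eq beta) by exact Hbeta.
    apply Rmult_le_compat_l; [exact Hbeta | apply play_next_dist; assumption].
  - replace (eta + beta * V (gamma2 p00 p10 K t) - (eta + beta * W (gamma2 p00 p10 K t)))
      with (beta * (V (gamma2 p00 p10 K t) - W (gamma2 p00 p10 K t))) by ring.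
    rewrite Rabs_mult, (Rabs_pos_eq beta) by exact Hbeta.
    apply Rmult_le_compat_l; [exact Hbeta | apply HVW, gamma2_bounds; lra].
Qed.

Definition value_iter (n : nat) : R -> R := Nat.iter n bellman (fun _ => 0).

Lemma value_iter_convex_lip L n :
  R0 <= R1 -> beta < 1 -> 0 <= L -> (R1 - R0) + beta * ((p10 - p00) * L) <= L ->
  convex_lip L (value_iter n).
Proof.
  intros HR Hbeta1 HL Hinv; induction n as [| n IH]; simpl.
  - intros t _; exists 0, 0; unfold supports, line; repeat split; intros; lra.
  - apply bellman_convex_lip; assumption.
Qed.

Section FixedPoint.

Variables (V : R -> R) (M : R).
Hypotheses (HVfix : forall t, 0 <= t <= 1 -> V t = bellman V t)
  (HVbound : forall t, 0 <= t <= 1 -> Rabs (V t) <= M).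

Lemma value_iter_dist n t : 0 <= t <= 1 -> Rabs (V t - value_iter n t) <= beta ^ n * M.
Proof.
  revert t; induction n as [| n IH]; intros t Ht; simpl.
  - rewrite Rminus_0_r, Rmult_1_l; auto.
  - rewrite HVfix, Rmult_assoc by exact Ht; apply bellman_dist; assumption.
Qed.

Lemma value_iter_approx e :
  beta < 1 -> 0 < e -> exists n, forall t, 0 <= t <= 1 -> Rabs (V t - value_iter n t) <= e.
Proof.
  intros Hbeta1 He.
  set (C := Rabs M + 1); assert (HC : 0 < C) by (pose proof (Rabs_pos M); unfold C; lra).
  destruct (pow_lt_1_zero beta ltac:(rewrite Rabs_pos_eq; lra) (e / C)) as [n Hn].
  { apply Rdiv_lt_0_compat; assumption. }
  specialize (Hn n (Nat.le_refl n)); rewrite Rabs_pos_eq in Hn by (apply pow_le; lra).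
  exists n; intros t Ht; eapply Rle_trans; [apply value_iter_dist, Ht |].
  assert (beta ^ n * M <= beta ^ n * C).
  { apply Rmult_le_compat_l; [apply pow_le; lra | pose proof (Rle_abs M); unfold C; lra]. }
  assert (beta ^ n * C < e / C * C) by (apply Rmult_lt_compat_r; assumption).
  replace (e / C * C) with e in * by (field; lra).
  lra.
Qed.

Lemma fixpoint_lipschitz L :
  R0 <= R1 -> beta < 1 -> 0 <= L -> (R1 - R0) + beta * ((p10 - p00) * L) <= L ->
  lipschitz L V /\ lipschitz ((p10 - p00) * L) (play_next V V).
Proof.
  intros HR Hbeta1 HL Hinv; split; apply lipschitz_of_approx; intros e He;
    destruct (value_iter_approx e Hbeta1 He) as [n Hn];
    pose proof (value_iter_convex_lip L n HR Hbeta1 HL Hinv) as Hc.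
  - exists (value_iter n); split; [apply convex_lip_lipschitz, Hc | exact Hn].
  - exists (play_next (value_iter n) (value_iter n)); split.
    + apply convex_lip_lipschitz, play_next_convex_lip, Hc.
    + intros t Ht; apply play_next_dist; assumption.
Qed.

End FixedPoint.

Lemma advantage_antitone VS VNS V x y :
  R0 <= R1 -> beta < 1 -> (1 <= K)%nat -> 3 * (beta * (p10 - p00)) <= 1 ->
  bellman_solution p00 p10 rho0 rho1 R0 R1 eta beta K VS VNS V ->
  0 <= x -> x <= y -> y <= 1 -> VS y - VNS y <= VS x - VNS x.
Proof.
  intros HR Hbeta1 HK H3 [[M HM] [HVS [HVNS HV]]] Hx Hxy Hy.
  set (dl := p10 - p00) in *.
  assert (Hbd : 0 <= beta * dl) by (apply Rmult_le_pos; unfold dl; lra).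
  (* the smallest Lipschitz constant that the Bellman operator provably preserves *)
  set (L := (R1 - R0) / (1 - beta * dl)).
  assert (HLeq : L * (1 - beta * dl) = R1 - R0) by (unfold L; field; lra).
  assert (HL : 0 <= L) by (unfold L; apply Rle_mult_inv_pos; lra).
  assert (Hfix : forall t, 0 <= t <= 1 -> V t = bellman V t).
  { intros t Ht; rewrite HV by exact Ht; unfold bellman.
    rewrite HVS, HVNS by exact Ht; reflexivity. }
  assert (Hinv : (R1 - R0) + beta * (dl * L) <= L) by lra.
  destruct (fixpoint_lipschitz V M Hfix HM L HR Hbeta1 HL Hinv) as [LV Lplay].
  assert (Hd : Rabs ((p00 - p10) ^ K) <= dl).
  { replace dl with (Rabs (p00 - p10)) by (unfold dl; split_Rabs; lra).
    apply Rabs_pow_le_Rabs; [split_Rabs; lra | exact HK]. }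
  assert (Hplay : play_next V V y - play_next V V x <= dl * L * (y - x)).
  { eapply Rle_trans; [apply Lplay; lra |].
    rewrite Rabs_pos_eq by lra; apply Rle_refl. }
  assert (Hskip : V (gamma2 p00 p10 K x) - V (gamma2 p00 p10 K y) <= dl * L * (y - x)).
  { eapply Rle_trans; [apply LV; apply gamma2_bounds; lra |].
    rewrite gamma2_sub, Rabs_mult, Rabs_minus_sym, (Rabs_pos_eq (y - x)) by lra.
    assert (Rabs ((p00 - p10) ^ K) * (y - x) <= dl * (y - x))
      by (apply Rmult_le_compat_r; lra).
    nra. }
  rewrite (HVS x), (HVS y), (HVNS x), (HVNS y) by lra.
  fold (play_next V V x) (play_next V V y); unfold R_S.
  assert (beta * (play_next V V y - play_next V V x) <= beta * (dl * L * (y - x)))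
    by (apply Rmult_le_compat_l; lra).
  assert (beta * (V (gamma2 p00 p10 K x) - V (gamma2 p00 p10 K y))
          <= beta * (dl * L * (y - x))) by (apply Rmult_le_compat_l; lra).
  assert (0 <= (y - x) * (L * (1 - 3 * (beta * dl)))) by (apply Rmult_le_pos; nra).
  nra.
Qed.

End Bandit.

Theorem lemma6 (p00 p10 rho0 rho1 R0 R1 eta beta : R) (K : nat)
    (VS VNS V : R -> R) :
  0 <= p00 <= 1 -> 0 <= p10 <= 1 ->
  0 <= rho0 <= 1 -> 0 <= rho1 <= 1 ->
  rho0 < rho1 -> R0 < R1 ->
  0 < beta < 1 ->
  (1 < K)%nat ->
  p00 < p10 ->
  bellman_solution p00 p10 rho0 rho1 R0 R1 eta beta K VS VNS V ->
  let b := Rmin 1 ((R1 - R0) / (rho1 - rho0)) in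
  ((0 < p10 - p00 < b / 5) \/ (beta < b / 5)) ->
  forall x y, 0 <= x -> x <= y -> y <= 1 ->
    VS y - VNS y <= VS x - VNS x.
Proof.
  intros H00 H10 Hr0 Hr1 Hr HR Hbeta HK Hp HB b Hcase x y Hx Hxy Hy.
  assert (Hb1 : b <= 1) by apply Rmin_l.
  assert (H3 : 3 * (beta * (p10 - p00)) <= 1) by (destruct Hcase; nra).
  apply (advantage_antitone p00 p10 rho0 rho1 R0 R1 eta beta K) with (V := V);
    first [assumption | lra | lia].
Qed.
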